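(* Let $n,N$ be positive integers. For $f,\phi\in[0,1]$ let $a_{f,\phi}=e^{i2\pi\phi}\left[1,\ e^{i2\pi f},\ \ldots,\ e^{i2\pi(n-1)f}\right]^T\in\mathbb{C}^n$, and let $\mathcal{A}=\{a_{f,\phi}: f,\phi\in[0,1]\}$ and $\mathcal{A}_N=\{a_{m/N,\phi}: m=0,\ldots,N-1,\ \phi\in[0,1]\}$. Then for every $x\in\mathbb{C}^n$, $$\left(1-\frac{2\pi n}{N}\right)\|x\|_{\mathcal{A}_N}\le\|x\|_{\mathcal{A}}\le\|x\|_{\mathcal{A}_N}.$$
   Context: For a set $\mathcal{B}\subset\mathbb{C}^n$, the atomic norm is the gauge $\|x\|_{\mathcal{B}}=\inf\{t>0: x\in t\,\operatorname{conv}(\mathcal{B})\}$. *)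

From HB Require Import structures.
From mathcomp Require Import all_boot all_order all_algebra.
From mathcomp Require Import complex.
From mathcomp Require Import all_classical all_reals all_analysis.
Set Implicit Arguments. Unset Strict Implicit. Unset Printing Implicit Defensive.
Import Order.TTheory GRing.Theory Num.Theory.
Local Open Scope classical_set_scope.
Local Open Scope ring_scope.
Local Open Scope complex_scope.

Section Defs.
Variables (R : realType) (n : nat).

Definition cexpi (theta : R) : R[i] := Complex (cos theta) (sin theta).

Definition conv_hull (B : set 'cV[R[i]]_n) : set 'cV[R[i]]_n :=
  [set x | exists k : nat, exists w : 'I_k -> R, exists b : 'I_k -> 'cV[R[i]]_n,
     (forall j, 0 <= w j) /\ \sum_(j < k) w j = 1 /\ (forall j, B (b j)) /\
     x = \sum_(j < k) ((w j)%:C *: b j)].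

(* atomic norm ||x||_B = inf { t > 0 : x \in t conv(B) }, valued in \bar R
   (inf of the empty set is +oo) *)
Definition atomic_norm (B : set 'cV[R[i]]_n) (x : 'cV[R[i]]_n) : \bar R :=
  ereal_inf [set (t%:E)%E | t in
     [set t : R | 0 < t /\ exists2 y, conv_hull B y & x = (t%:C) *: y]].

Definition atom (f phi : R) : 'cV[R[i]]_n :=
  \col_(j < n) (cexpi (2 * pi * phi) * cexpi (2 * pi * (j%:R * f))).

Definition atoms_cont : set 'cV[R[i]]_n :=
  [set a | exists f phi, [/\ 0 <= f <= 1, 0 <= phi <= 1 & a = atom f phi]].

Definition atoms_grid (N : nat) : set 'cV[R[i]]_n :=
  [set a | exists (m : nat) phi,
     [/\ (m < N)%N, 0 <= phi <= 1 & a = atom (m%:R / N%:R) phi]].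

End Defs.

Arguments atoms_cont {R} n.
Arguments atoms_grid {R} n N.
Arguments atom {R} n f phi.
Arguments atomic_norm {R n} B x.
Arguments conv_hull {R n} B.

(* Each atom [a_{f,phi}] is a conic combination of grid atoms of total weight at
   most [T = (2N - n + 1) / (2 (N - n + 1))]: the monomials [e^{i 2 pi j f}], [j < n],
   are interpolated from the [N] grid frequencies with the samples of the product
   of two Dirichlet kernels, of lengths [N] and [N - n + 1], whose l1 norm over
   the grid is bounded by AM-GM and Parseval. Hence [||x||_{A_N} <= T ||x||_A],
   and [(1 - 2 pi n / N) T <= 1]. The other inequality is [A_N `<=` A]. *)

From HB Require Import structures.
From mathcomp Require Import all_boot all_order all_algebra.
From mathcomp Require Import complex.
From mathcomp Require Import all_classical all_reals all_analysis.
From mathcomp Require Import ring lra zify.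
Set Implicit Arguments. Unset Strict Implicit. Unset Printing Implicit Defensive.
Import Order.TTheory GRing.Theory Num.Theory.
Local Open Scope classical_set_scope.
Local Open Scope ring_scope.
Local Open Scope complex_scope.

Lemma sum_expr_root_unity (R : idomainType) (z : R) (N : nat) :
  z ^+ N = 1 -> z != 1 -> \sum_(m < N) z ^+ m = 0.
Proof.
move=> zN z1; have := subrX1 z N; rewrite zN subrr => /esym/eqP.
by rewrite mulf_eq0 subr_eq0 (negbTE z1) => /eqP.
Qed.

Section ComplexExponential.
Variable R : realType.
Local Notation E := (@cexpi R).

Lemma cexpi0 : E 0 = 1.
Proof. by rewrite /cexpi cos0 sin0. Qed.

Lemma cexpiD (x y : R) : E (x + y) = E x * E y.
Proof.
rewrite /cexpi cosD sinD; apply/eqP; rewrite eq_complex /=.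
by apply/andP; split; apply/eqP; ring.
Qed.

Lemma cexpiMn (x : R) k : E (x *+ k) = E x ^+ k.
Proof.
elim: k => [|k IH]; first by rewrite mulr0n expr0 cexpi0.
by rewrite mulrS cexpiD IH exprS.
Qed.

Lemma cexpi_2pi : E (2 * pi) = 1.
Proof. by rewrite /cexpi mulr_natl cos2pi sin2pi. Qed.

Lemma cexpi_2piMn k : E ((2 * pi) *+ k) = 1.
Proof. by rewrite cexpiMn cexpi_2pi expr1n. Qed.

Lemma cexpi_pi : E pi = -1.
Proof. by rewrite /cexpi cospi sinpi; apply/eqP; rewrite eq_complex /= oppr0 !eqxx. Qed.

Lemma conj_cexpi (x : R) : (E x)^* = E (- x).
Proof. by rewrite /cexpi cosN sinN. Qed.

Lemma normc_ge0 (z : R[i]) : 0 <= Normc.normc z.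
Proof. by case: z => a b; exact: sqrtr_ge0. Qed.

Lemma normc_cexpi (x : R) : Normc.normc (E x) = 1.
Proof. by rewrite /cexpi /= cos2Dsin2 sqrtr1. Qed.

Lemma sqr_normcE (z : R[i]) : ((Normc.normc z) ^+ 2)%:C = z * conjc z.
Proof.
have normcE : (Normc.normc z)%:C = `|z| by case: z => a b; rewrite normc_def.
by rewrite rmorphXn /= normcE; exact: sqr_normc.
Qed.

Lemma cexpi_2pi_natB (a b : nat) : E (2 * pi * (a%:R - b%:R)) = 1.
Proof.
have -> : 2 * pi * (a%:R - b%:R) = (2 * pi) *+ a + - ((2 * pi) *+ b) :> R.
  by rewrite mulrBr !mulr_natr.
by rewrite cexpiD -conj_cexpi !cexpi_2piMn conjc1 mulr1.
Qed.

(* [cos (2 y) = 1 - 2 sin y ^ 2] and [sin y <> 0] on [0 < |y| < pi]. *)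
Lemma cexpi_double_neq1 (y : R) : 0 < `|y| < pi -> E (y *+ 2) != 1.
Proof.
move=> /andP[y0 ypi]; apply/negP => /eqP; rewrite /cexpi => -[cos2y _].
have : cos (y *+ 2) = 1 - 2 * sin y ^+ 2.
  by rewrite mulr2n cosD -!expr2; have := cos2Dsin2 y; lra.
rewrite cos2y => /eqP; rewrite -subr_eq0 opprB addrC subrK mulf_eq0 pnatr_eq0.
rewrite expf_eq0 /=; apply/negP.
case: (ltrgtP y 0) => hy.
- rewrite ltr0_norm // in ypi.
  by rewrite -[y]opprK sinN oppr_eq0 gt_eqF // sin_gt0_pi // oppr_gt0 hy.
- by rewrite gtr0_norm // in ypi; rewrite gt_eqF // sin_gt0_pi // hy.
- by move: y0; rewrite hy normr0 ltxx.
Qed.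

Lemma cexpi_unit_circle (a b : R) : a ^+ 2 + b ^+ 2 = 1 ->
  exists2 phi, 0 <= phi <= 1 & E (2 * pi * phi) = a +i* b.
Proof.
move=> hab.
have ha : -1 <= a <= 1 by apply/andP; split; nra.
have cos_t : cos (acos a) = a by apply: acosK; rewrite in_itv /=.
have sin_t : sin (acos a) = `|b|.
  by rewrite sin_acos // (_ : 1 - a ^+ 2 = b ^+ 2) ?sqrtr_sqr //; lra.
set t := acos a in cos_t sin_t *.
have t_ge0 : 0 <= t := acos_ge0 ha; have t_le_pi : t <= pi := acos_lepi ha.
have pi_gt0 := pi_gt0 R.
have twopi_neq0 : 2 * (pi : R) != 0 by rewrite mulf_neq0 // gt_eqF.
have t_frac : 0 <= t / (2 * pi) <= 1.
  by rewrite divr_ge0 ?ler_pdivrMr ?mulr_gt0 //= ?mul1r; [nra | lra].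
case: (leP 0 b) => hb.
  exists (t / (2 * pi)) => //.
  by rewrite mulrC divfK // /cexpi cos_t sin_t ger0_norm.
exists (1 - t / (2 * pi)); first by lra.
rewrite mulrBr mulr1 [2 * pi * _]mulrC divfK //.
have := cexpi_2pi; rewrite /cexpi => -[cos_2pi sin_2pi].
by rewrite cosB sinB cos_2pi sin_2pi cos_t sin_t ltr0_norm //; congr (_ +i* _); ring.
Qed.

Lemma cexpi_polar (z : R[i]) :
  exists2 phi, 0 <= phi <= 1 & z = (Normc.normc z)%:C * E (2 * pi * phi).
Proof.
case: z => x y; set r := Normc.normc (x +i* y).
have r_ge0 : 0 <= r := normc_ge0 _.
have rE : r ^+ 2 = x ^+ 2 + y ^+ 2 by rewrite sqr_sqrtr // addr_ge0 // sqr_ge0.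
have [r0|r_neq0] := eqVneq r 0.
  exists 0; first by rewrite lexx ler01.
  by rewrite r0 mul0r; move: rE; rewrite r0 expr0n /= => xy0; congr (_ +i* _); nra.
have [phi phi01 ephi] : exists2 phi, 0 <= phi <= 1 & E (2 * pi * phi) = (x / r) +i* (y / r).
  by apply: cexpi_unit_circle; rewrite !expr_div_n -mulrDl -rE divff // expf_eq0.
by exists phi => //; rewrite ephi; apply/eqP; rewrite eq_complex /=; apply/andP; split; apply/eqP; field.
Qed.

End ComplexExponential.

Section GridSums.
Variables (R : realType) (N : nat).
Hypothesis N_gt0 : (0 < N)%N.
Local Notation E := (@cexpi R).

Let N_neq0 : (N%:R : R) != 0. Proof. by rewrite pnatr_eq0 -lt0n. Qed.

Lemma sum_cexpi_grid (a b : nat) : (a < b + N)%N -> (b < a + N)%N ->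
  \sum_(m < N) E ((2 * pi * (a%:R - b%:R) / N%:R) *+ m) = if a == b then N%:R else 0.
Proof.
move=> ltab ltba; under eq_bigr do rewrite cexpiMn.
have [->|nab] := eqVneq a b.
  rewrite subrr mulr0 mul0r cexpi0.
  by under eq_bigr do rewrite expr1n; rewrite sumr_const card_ord.
apply: sum_expr_root_unity.
  rewrite -cexpiMn -(@cexpi_2pi_natB _ a b); congr E.
  by rewrite -mulr_natr; field.
rewrite (_ : _ / _ = (pi * (a%:R - b%:R) / N%:R) *+ 2); last by rewrite -mulr_natr; ring.
apply: cexpi_double_neq1.
have dab : 0 < `|a%:R - b%:R : R| < N%:R.
  have h1 : (a%:R : R) < b%:R + N%:R by rewrite -natrD ltr_nat.
  have h2 : (b%:R : R) < a%:R + N%:R by rewrite -natrD ltr_nat.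
  rewrite normr_gt0 subr_eq0 eqr_nat nab ltr_norml /=.
  by apply/andP; split; lra.
have pi_gt0 := pi_gt0 R; have N_gt0' : (0 : R) < N%:R by rewrite ltr0n.
case/andP: dab => d_gt0 d_ltN.
rewrite !normrM normfV (gtr0_norm pi_gt0) (gtr0_norm N_gt0').
by rewrite divr_gt0 ?mulr_gt0 //= ltr_pdivrMr // ltr_pM2l.
Qed.

Definition dirichlet (L : nat) (s theta : R) : R[i] :=
  \sum_(p < L) E ((p%:R - s) * theta).

Lemma sum_sqr_normc_dirichlet (L : nat) (s theta : R) : (L <= N)%N ->
  \sum_(m < N) Normc.normc (dirichlet L s (theta - 2 * pi * m%:R / N%:R)) ^+ 2
  = (N * L)%:R.
Proof.
move=> LN; apply: (@complexI R); rewrite rmorph_sum /=.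
under eq_bigr do rewrite sqr_normcE.
transitivity (\sum_(m < N) \sum_(p < L) \sum_(p' < L)
   (E ((p%:R - p'%:R) * theta) * E ((2 * pi * (p'%:R - p%:R) / N%:R) *+ m))).
  apply: eq_bigr => m _; rewrite /dirichlet rmorph_sum mulr_suml.
  apply: eq_bigr => p _; rewrite mulr_sumr; apply: eq_bigr => p' _.
  (* [rmorph_sum] leaves [conjc] packed as a ring morphism: unpack it for [conj_cexpi]. *)
  by rewrite -[X in _ * X = _]/(conjc (E _)) conj_cexpi -!cexpiD -mulr_natr; congr E; ring.
rewrite exchange_big /=; under eq_bigr do rewrite exchange_big /=.
transitivity (\sum_(p < L) \sum_(p' < L) (if (p' : nat) == p then N%:R else 0 : R[i])).
  apply: eq_bigr => p _; apply: eq_bigr => p' _.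
  have ltpN (q : 'I_L) : (q < N)%N := leq_trans (ltn_ord q) LN.
  rewrite -mulr_sumr sum_cexpi_grid ?ltn_addl //.
  by case: eqP => [->|_]; rewrite ?subrr ?mul0r ?cexpi0 ?mul1r ?mulr0.
under eq_bigr do rewrite -big_mkcond /= big_pred1_eq.
by rewrite sumr_const card_ord rmorph_nat natrM mulr_natr.
Qed.

End GridSums.

Section Interpolation.
Variables (R : realType) (N n : nat).
Hypotheses (n_gt0 : (0 < n)%N) (n_le_N : (n <= N)%N).
Local Notation E := (@cexpi R).
Local Notation L := (N - n).+1.

Let N_gt0 : (0 < N)%N := leq_trans n_gt0 n_le_N.

Definition interp_coef (f : R) (m : nat) : R[i] :=
  let theta := 2 * pi * f - 2 * pi * m%:R / N%:R in
  (((N * L)%:R)^-1)%:C * (dirichlet N (N - n)%:R theta * dirichlet L 0 theta).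

(* The product of the two Dirichlet kernels has frequencies [p + q - (N - n)];
   against the grid only [p + q = j + (N - n)] survives, once for each [q < L]. *)
Lemma interp_coef_expansion (f : R) (j : nat) : (j < n)%N ->
  \sum_(m < N) interp_coef f m * E (2 * pi * (j%:R * (m%:R / N%:R)))
  = E (2 * pi * (j%:R * f)).
Proof.
move=> jn; set s := (N - n)%:R : R; set a := (j + (N - n))%N.
set kappa := (((N * L)%:R)^-1)%:C : R[i].
transitivity (kappa * \sum_(m < N) \sum_(p < N) \sum_(q < L)
   (E (((p + q)%:R - s) * (2 * pi * f)) *
    E ((2 * pi * (a%:R - (p + q)%:R) / N%:R) *+ m))).
  rewrite mulr_sumr; apply: eq_bigr => m _; rewrite /interp_coef -mulrA.
  congr (_ * _); rewrite /dirichlet -mulrA mulr_suml; apply: eq_bigr => p _.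
  rewrite mulr_suml mulr_sumr; apply: eq_bigr => q _.
  by rewrite mulrA -!cexpiD; congr E; rewrite -mulr_natr /a /s !natrD; ring.
rewrite exchange_big /=; under eq_bigr do rewrite exchange_big /=.
transitivity (kappa * \sum_(p < N) \sum_(q < L)
   (if a == (p + q)%N then E (((p + q)%:R - s) * (2 * pi * f)) * N%:R else 0)).
  congr (_ * _); apply: eq_bigr => p _; apply: eq_bigr => q _.
  have := ltn_ord p; have := ltn_ord q => ltq ltp.
  rewrite -mulr_sumr (@sum_cexpi_grid R N N_gt0); try by rewrite /a; lia.
  by case: eqP; rewrite ?mulr0.
rewrite exchange_big /=.
transitivity (kappa * \sum_(q < L) (E (2 * pi * (j%:R * f)) * N%:R)).
  congr (_ * _); apply: eq_bigr => q _.
  have := ltn_ord q => ltq.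
  have le_qa : (q <= a)%N by rewrite /a; lia.
  have lt_aqN : (a - q < N)%N by rewrite /a; lia.
  under eq_bigr => p _ do rewrite -{1}(subnK le_qa) eqn_add2r eq_sym.
  rewrite -big_mkcond /= (big_ord1_eq _ (fun p => E (((p + q)%:R - s) * (2 * pi * f)) * N%:R)).
  by rewrite lt_aqN subnK // /a /s natrD; congr (E _ * _); ring.
rewrite sumr_const card_ord /kappa fmorphV rmorph_nat natrM.
have N_neq0 : (N%:R : R[i]) != 0 by rewrite pnatr_eq0 -lt0n.
by rewrite -mulr_natr; field; rewrite N_neq0 andbT -(natrD _ 1).
Qed.

Definition interp_weight : R := (N + L)%:R / (2 * L%:R).

Lemma interp_weight_gt0 : 0 < interp_weight.
Proof. by rewrite divr_gt0 ?mulr_gt0 ?ltr0n ?addn_gt0 ?N_gt0. Qed.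

Lemma mul_interp_weight_le1 : (1 - 2 * pi * n%:R / N%:R) * interp_weight <= 1.
Proof.
have L_gt0 : (0 : R) < L%:R by rewrite ltr0n.
rewrite /interp_weight mulrA ler_pdivrMr ?mulr_gt0 // mul1r.
rewrite -[(N - n).+1]addn1 !natrD natrB //.
have N_gt0' : (0 : R) < N%:R by rewrite ltr0n.
have nN : (n%:R : R) <= N%:R by rewrite ler_nat.
set q := 2 * pi * n%:R / N%:R.
have qN : q * N%:R = 2 * pi * n%:R by rewrite /q divfK ?lt0r_neq0.
have q_ge0 : 0 <= q by rewrite /q divr_ge0 ?mulr_ge0 ?ler0n ?pi_ge0.
have := pi_ge2 R; have := ler0n R n; nra.
Qed.

Lemma sum_normc_interp_coef_le (f : R) :
  \sum_(m < N) Normc.normc (interp_coef f m) <= interp_weight.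
Proof.
set kappa := ((N * L)%:R)^-1 : R.
have kappa_ge0 : 0 <= kappa by rewrite invr_ge0 ler0n.
pose theta (m : 'I_N) := 2 * pi * f - 2 * pi * m%:R / N%:R.
pose D1 m := Normc.normc (dirichlet N (N - n)%:R (theta m)).
pose D2 m := Normc.normc (dirichlet L 0 (theta m)).
have am_gm (m : 'I_N) : Normc.normc (interp_coef f m) <= kappa / 2 * (D1 m ^+ 2 + D2 m ^+ 2).
  rewrite /interp_coef !Normc.normcM (_ : Normc.normc _ = kappa); last first.
    by rewrite /= expr0n /= addr0 sqrtr_sqr ger0_norm.
  by rewrite -/(D1 m) -/(D2 m); have := sqr_ge0 (D1 m - D2 m); nra.
apply: le_trans (ler_sum _ (fun m _ => am_gm m)) _.
rewrite -mulr_sumr big_split /= !sum_sqr_normc_dirichlet //; last by lia.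
have N_neq0 : (N%:R : R) != 0 by rewrite pnatr_eq0 -lt0n.
rewrite /kappa /interp_weight !natrM natrD le_eqVlt; apply/predU1l.
by field; rewrite N_neq0 andbT -(natrD _ 1).
Qed.

End Interpolation.

Section ConicCombination.
Variables (R : realType) (V : lmodType R[i]).
Implicit Types (B : set V) (s t : R) (v : V).

Definition conic_comb B s v : Prop :=
  exists k (w : 'I_k -> R) (b : 'I_k -> V),
    (forall j, 0 <= w j) /\ \sum_(j < k) w j = s /\ (forall j, B (b j)) /\
    v = \sum_(j < k) ((w j)%:C *: b j).

Lemma conic_comb0 B : conic_comb B 0 0.
Proof.
exists 0%N, (fun _ => 0), (fun _ => 0).
by rewrite !big_ord0; split=> //; split=> //; split=> // -[].
Qed.

Lemma conic_comb1 B b s : B b -> 0 <= s -> conic_comb B s (s%:C *: b).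
Proof. by move=> Bb s_ge0; exists 1%N, (fun _ => s), (fun _ => b); rewrite !big_ord1. Qed.

Lemma conic_combD B s1 s2 v1 v2 :
  conic_comb B s1 v1 -> conic_comb B s2 v2 -> conic_comb B (s1 + s2) (v1 + v2).
Proof.
move=> [k1 [w1 [b1 [w1_ge0 [<- [Bb1 ->]]]]]] [k2 [w2 [b2 [w2_ge0 [<- [Bb2 ->]]]]]].
pose glue T (f1 : 'I_k1 -> T) (f2 : 'I_k2 -> T) (i : 'I_(k1 + k2)) :=
  match fintype.split i with inl a => f1 a | inr a => f2 a end.
have glue_sum (T : nmodType) (f1 : 'I_k1 -> T) f2 :
    \sum_(i < k1 + k2) glue T f1 f2 i = \sum_(i < k1) f1 i + \sum_(i < k2) f2 i.
  rewrite big_split_ord /=; congr (_ + _); apply: eq_bigr => i _.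
    by rewrite /glue (unsplitK (inl i)).
  by rewrite /glue (unsplitK (inr i)).
exists (k1 + k2)%N, (glue R w1 w2), (glue V b1 b2).
do !split; try by move=> i; rewrite /glue; case: fintype.split.
  exact: glue_sum.
rewrite -glue_sum; apply: eq_bigr => i _.
by rewrite /glue; case: fintype.split.
Qed.

Lemma conic_combZ B c s v :
  0 <= c -> conic_comb B s v -> conic_comb B (c * s) (c%:C *: v).
Proof.
move=> c_ge0 [k [w [b [w_ge0 [<- [Bb ->]]]]]].
exists k, (fun j => c * w j), b; do !split => //.
- by move=> j; rewrite mulr_ge0.
- by rewrite mulr_sumr.
- by rewrite scaler_sumr; apply: eq_bigr => j _; rewrite scalerA rmorphM.
Qed.

Lemma conic_comb_sum B k (s : 'I_k -> R) (v : 'I_k -> V) :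
  (forall i, conic_comb B (s i) (v i)) ->
  conic_comb B (\sum_(i < k) s i) (\sum_(i < k) v i).
Proof.
elim: k s v => [|k IH] s v h; first by rewrite !big_ord0; exact: conic_comb0.
by rewrite !big_ord_recr /=; apply: conic_combD; [apply: IH | apply: h].
Qed.

Lemma conic_comb_trans B B' T s v : 0 <= T ->
  (forall b, B b -> conic_comb B' T b) -> conic_comb B s v -> conic_comb B' (T * s) v.
Proof.
move=> T_ge0 BB' [k [w [b [w_ge0 [<- [Bb ->]]]]]].
rewrite mulr_sumr; apply: conic_comb_sum => j.
by rewrite mulrC; apply: conic_combZ => //; apply: BB'.
Qed.

(* Adding the weight [(t - s) / 2] on both [b] and [- b] leaves [v] unchanged. *)
Lemma conic_comb_le_weight B b s t v : B b -> B (- b) -> s <= t ->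
  conic_comb B s v -> conic_comb B t v.
Proof.
move=> Bb Bnb le_st hv; set c := (t - s) / 2.
have c_ge0 : 0 <= c by rewrite divr_ge0 // subr_ge0.
have := conic_combD (conic_combD hv (conic_comb1 Bb c_ge0)) (conic_comb1 Bnb c_ge0).
by rewrite scalerN addrK (_ : s + c + c = t) //; rewrite /c; field.
Qed.

End ConicCombination.

Section AtomicNorm.
Variables (R : realType) (n : nat).
Implicit Types (B : set 'cV[R[i]]_n) (x : 'cV[R[i]]_n).

Lemma conv_hullE B : conv_hull B = conic_comb B 1.
Proof. by []. Qed.

Lemma atomic_norm_ge0 B x : (0 <= atomic_norm B x)%E.
Proof. by apply/ereal_infP => _ [t [t_gt0 _] <-]; rewrite lee_fin ltW. Qed.

Lemma atomic_norm_le B x s : 0 < s -> conic_comb B s x -> (atomic_norm B x <= s%:E)%E.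
Proof.
move=> s_gt0 hx; apply: ge_ereal_inf; exists s%:E => //.
exists s => //; split => //; exists ((s^-1)%:C *: x).
  rewrite conv_hullE -(mulVf (lt0r_neq0 s_gt0)).
  by apply: conic_combZ => //; rewrite invr_ge0 ltW.
by rewrite scalerA -rmorphM divff ?gt_eqF // scale1r.
Qed.

Lemma atomic_norm_le_scale B B' T x : 0 < T ->
  (forall b, B b -> conic_comb B' T b) ->
  (atomic_norm B' x <= T%:E * atomic_norm B x)%E.
Proof.
move=> T_gt0 BB'; rewrite -ereal_inf_pZl //.
apply/ereal_infP => _ [_ [t [t_gt0 [y hy ->]] <-] <-].
rewrite -EFinM; apply: atomic_norm_le; first exact: mulr_gt0.
rewrite mulrC; apply: conic_combZ; first exact: ltW.
by rewrite -[T]mulr1; apply: conic_comb_trans (ltW T_gt0) BB' _; rewrite -conv_hullE.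
Qed.

End AtomicNorm.

Section GridAtoms.
Variables (R : realType) (n N : nat).
Local Notation E := (@cexpi R).
Local Notation grid := (@atoms_grid R n N).

Lemma atom_phase (f phi : R) : atom n f phi = E (2 * pi * phi) *: atom n f 0.
Proof. by apply/matrixP => j k; rewrite !mxE mulr0 cexpi0 mul1r. Qed.

Lemma atom_half (f : R) : atom n f (1 / 2) = - atom n f 0.
Proof. by rewrite atom_phase (_ : 2 * pi * (1 / 2) = pi) ?cexpi_pi ?scaleN1r //; field. Qed.

Lemma atoms_grid_sub_cont : grid `<=` atoms_cont n.
Proof.
move=> _ [m [phi [mN phi01 ->]]]; exists (m%:R / N%:R), phi; split => //.
have N_gt0 : (0 : R) < N%:R by rewrite ltr0n (leq_ltn_trans _ mN).
by rewrite divr_ge0 ?ler0n //= ler_pdivrMr // mul1r ler_nat ltnW.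
Qed.

Lemma conic_comb_grid_atom (z : R[i]) (m : nat) : (m < N)%N ->
  conic_comb grid (Normc.normc z) (z *: atom n (m%:R / N%:R) 0).
Proof.
move=> mN; have [phi phi01 zE] := cexpi_polar z.
rewrite {2}zE -scalerA -atom_phase; apply: conic_comb1; last exact: normc_ge0.
by exists m, phi.
Qed.

Lemma atom_conic_comb_grid (f phi : R) : (0 < n)%N -> (n <= N)%N ->
  conic_comb grid (\sum_(m < N) Normc.normc (interp_coef N n f m)) (atom n f phi).
Proof.
move=> n_gt0 n_le_N.
have -> : atom n f phi =
    \sum_(m < N) ((E (2 * pi * phi) * interp_coef N n f m) *: atom n (m%:R / N%:R) 0).
  apply/matrixP => j k; rewrite !mxE summxE.
  under eq_bigr do rewrite !mxE mulr0 cexpi0 mul1r -mulrA.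
  by rewrite -mulr_sumr interp_coef_expansion.
under eq_bigr do rewrite -[Normc.normc _]mul1r -(normc_cexpi (2 * pi * phi)) -Normc.normcM.
by apply: conic_comb_sum => m; apply: conic_comb_grid_atom.
Qed.

Lemma atoms_cont_conic_comb_grid (a : 'cV[R[i]]_n) : (0 < n)%N -> (n <= N)%N ->
  atoms_cont n a -> conic_comb grid (interp_weight R N n) a.
Proof.
move=> n_gt0 n_le_N [f [phi [_ _ ->]]].
have N_gt0 := leq_trans n_gt0 n_le_N.
have grid0 : grid (atom n (0%:R / N%:R) 0) by exists 0%N, 0; rewrite lexx ler01.
have gridN0 : grid (- atom n (0%:R / N%:R) 0).
  rewrite -atom_half; exists 0%N, (1 / 2); split => //.
  by rewrite divr_ge0 ?ler01 //= ler_pdivrMr // mul1r ler1n.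
apply: conic_comb_le_weight grid0 gridN0 _ (atom_conic_comb_grid _ _ n_gt0 n_le_N).
exact: sum_normc_interp_coef_le.
Qed.

End GridAtoms.

Theorem mainTheorem9 (R : realType) (n N : nat) (hn : (0 < n)%N) (hN : (0 < N)%N)
    (x : 'cV[R[i]]_n) :
  (((1 - 2 * pi * n%:R / N%:R)%:E * atomic_norm (atoms_grid n N) x
      <= atomic_norm (atoms_cont n) x)%E)
  /\ (atomic_norm (atoms_cont n) x <= atomic_norm (atoms_grid n N) x)%E.
Proof.
split; last first.
  rewrite -[X in (_ <= X)%E]mul1e; apply: atomic_norm_le_scale ltr01 _.
  by move=> a /atoms_grid_sub_cont conta; rewrite -[a]scale1r; apply: conic_comb1.
set eps := 1 - 2 * pi * n%:R / N%:R.
have [eps_le0|eps_gt0] := leP eps 0.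
  apply: le_trans (atomic_norm_ge0 _ _).
  by apply: mule_le0_ge0; rewrite ?lee_fin ?atomic_norm_ge0.
have n_le_N : (n <= N)%N.
  have N_gt0 : (0 : R) < N%:R by rewrite ltr0n.
  move: eps_gt0; rewrite subr_gt0 ltr_pdivrMr // mul1r -(ler_nat R) => lt_2pin_N.
  by have := pi_ge2 R; have := ler0n R n; nra.
apply: le_trans (lee_wpmul2l _ (atomic_norm_le_scale _ (interp_weight_gt0 R hn n_le_N)
  (fun a => atoms_cont_conic_comb_grid hn n_le_N))) _; first by rewrite lee_fin ltW.
rewrite muleA -EFinM gee_pMl ?atomic_norm_ge0 //.
exact: mul_interp_weight_le1.
Qed.
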